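(* Let $v$ be a weight on $[0,1)$. For each $t\in[0,1)$ the operator $C_t\colon H^\infty_v\to H^\infty_v$ is continuous. Moreover, $\|C_0\|_{H^\infty_v\to H^\infty_v}=1$ and $$1\le \|C_t\|_{H^\infty_v\to H^\infty_v}\le -\frac{\log(1-t)}{t},\qquad t\in(0,1).$$
   Context: $\mathbb{D}=\{z\in\mathbb{C}:|z|<1\}$ and $H(\mathbb{D})$ is the space of holomorphic functions on $\mathbb{D}$. A weight is a continuous non-increasing function $v\colon[0,1)\to(0,\infty)$, extended to $\mathbb{D}$ by $v(z):=v(|z|)$. $H^\infty_v=\{f\in H(\mathbb{D}):\|f\|_{\infty,v}:=\sup_{z\in\mathbb{D}}|f(z)|v(z)<\infty\}$ with norm $\|\cdot\|_{\infty,v}$. For $t\in[0,1]$ the generalized Cesàro operator $C_t$ is defined on $f\in H(\mathbb{D})$ by $C_tf(0)=f(0)$ and $C_tf(z)=\frac{1}{z}\int_0^z\frac{f(\xi)}{1-t\xi}\,d\xi$ for $z\in\mathbb{D}\setminus\{0\}$. *)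

From Stdlib Require Import Reals.
From Coquelicot Require Import Coquelicot.
Open Scope R_scope.

(* A weight: continuous non-increasing v : [0,1) -> (0,oo), given as a
   function R -> R whose values outside [0,1) are irrelevant. *)
Definition is_weight (v : R -> R) : Prop :=
  (forall r, 0 <= r < 1 -> 0 < v r) /\
  (forall r s, 0 <= r -> r <= s -> s < 1 -> v s <= v r) /\
  (forall r, 0 <= r < 1 ->
     filterlim v (within (fun x => 0 <= x < 1) (locally r)) (locally (v r))).

Definition in_disc (z : C) : Prop := Cmod z < 1.

Definition holo_disc (f : C -> C) : Prop :=
  forall z, in_disc z -> @ex_derive C_AbsRing C_NormedModule f z.

Definition in_Hv (v : R -> R) (f : C -> C) : Prop :=
  holo_disc f /\ exists M, forall z, in_disc z -> Cmod (f z) * v (Cmod z) <= M.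

Definition normv (v : R -> R) (f : C -> C) : R :=
  real (Lub_Rbar (fun x => exists z, in_disc z /\ x = Cmod (f z) * v (Cmod z))).

Definition CRInt01 (g : R -> C) : C :=
  (RInt (fun s => Re (g s)) 0 1, RInt (fun s => Im (g s)) 0 1).

(* Line integral int_0^z h(xi) d xi along the segment [0,z], xi = s z. *)
Definition seg_int (h : C -> C) (z : C) : C :=
  Cmult z (CRInt01 (fun s => h (Cmult (RtoC s) z))).

Definition cesaro (t : R) (f : C -> C) (z : C) : C :=
  if Req_EM_T (Cmod z) 0 then f (RtoC 0)
  else Cmult (Cinv z)
         (seg_int (fun xi => Cdiv (f xi) (Cminus (RtoC 1) (Cmult (RtoC t) xi))) z).

Definition cesaro_opnorm (v : R -> R) (t : R) : Rbar :=
  Lub_Rbar (fun x => exists f, in_Hv v f /\ normv v f <= 1 /\ x = normv v (cesaro t f)).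

From Stdlib Require Import Reals Lra Lia.
From Coquelicot Require Import Coquelicot.
Open Scope R_scope.

(* [C_t f z] is the average over [s] in [0, 1] of [f (s z) / (1 - t s z)].  By Goursat's
   lemma a holomorphic [h] on the disc has the primitive [z |-> int_[0,z] h], so the ray
   average [z |-> (1/z) int_[0,z] h] is holomorphic off [0]; at [0] it is differentiable
   with derivative [h'(0) / 2].  Since [v] is non-increasing and [|1 - t s z| >= 1 - t s],
   [|C_t f z| v(|z|) <= ||f||_v int_0^1 ds / (1 - t s) = - log (1 - t) / t] (and [1] for
   [t = 0]); as [C_t] is linear it is Lipschitz.  The constant [1 / v 0] has norm at most
   [1] and [C_t] fixes its value at [0], so [||C_t|| >= 1]. *)

Lemma Cmod_sub_triangle a b c : Cmod (a - c)%C <= Cmod (a - b)%C + Cmod (b - c)%C.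
Proof.
  replace (a - c)%C with ((a - b) + (b - c))%C by ring. apply Cmod_triangle.
Qed.

Lemma Cmod_sub_sym a b : Cmod (a - b)%C = Cmod (b - a)%C.
Proof. replace (a - b)%C with (- (b - a))%C by ring. apply Cmod_opp. Qed.

Lemma Cmod_rev_triangle a b : Cmod a - Cmod b <= Cmod (a + b)%C.
Proof.
  pose proof (Cmod_triangle (a + b)%C (- b)%C) as H. rewrite Cmod_opp in H.
  replace (a + b + - b)%C with a in H by ring. lra.
Qed.

Lemma Cmod_sub_rev_triangle a b : Rabs (Cmod a - Cmod b) <= Cmod (a - b)%C.
Proof.
  apply Rabs_le. split.
  - pose proof (Cmod_rev_triangle b (a - b)%C) as H.
    replace (b + (a - b))%C with a in H by ring. lra.
  - pose proof (Cmod_rev_triangle a (b - a)%C) as H.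
    replace (a + (b - a))%C with b in H by ring. rewrite (Cmod_sub_sym b a) in H. lra.
Qed.

Lemma re_minus a b : Re (a - b)%C = Re a - Re b.
Proof. unfold Cminus. rewrite re_plus, re_opp. ring. Qed.

Lemma im_minus a b : Im (a - b)%C = Im a - Im b.
Proof. unfold Cminus. rewrite im_plus, im_opp. ring. Qed.

Lemma im_le_Cmod z : Rabs (Im z) <= Cmod z.
Proof. eapply Rle_trans; [apply Rmax_r | apply Rmax_Cmod]. Qed.

Lemma Cmod_le_Re_Im z : Cmod z <= Rabs (Re z) + Rabs (Im z).
Proof.
  pose proof (Cmod2_alt z) as H. pose proof (Cmod_ge_0 z).
  pose proof (Rabs_pos (Re z)). pose proof (Rabs_pos (Im z)).
  rewrite <- (pow2_abs (Re z)), <- (pow2_abs (Im z)) in H. nra.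
Qed.

Lemma Cmod_RtoC r : 0 <= r -> Cmod (RtoC r) = r.
Proof. intros. rewrite Cmod_R. now apply Rabs_pos_eq. Qed.

Lemma Cmod_convex p q s r : Cmod p <= r -> Cmod q <= r -> 0 <= s <= 1 ->
  Cmod (p + RtoC s * (q - p))%C <= r.
Proof.
  intros Hp Hq Hs.
  replace (p + RtoC s * (q - p))%C with (RtoC (1 - s) * p + RtoC s * q)%C
    by (rewrite RtoC_minus; ring).
  eapply Rle_trans; [apply Cmod_triangle|]. rewrite !Cmod_mult, !Cmod_RtoC by lra. nra.
Qed.

Lemma Cmod_convex_lt p q s : Cmod p < 1 -> Cmod q < 1 -> 0 <= s <= 1 ->
  Cmod (p + RtoC s * (q - p))%C < 1.
Proof.
  intros Hp Hq Hs. eapply Rle_lt_trans.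
  - apply (Cmod_convex p q s (Rmax (Cmod p) (Cmod q))); auto; [apply Rmax_l | apply Rmax_r].
  - now apply Rmax_lub_lt.
Qed.

Lemma in_disc_0 : in_disc (RtoC 0).
Proof. unfold in_disc. rewrite Cmod_0. lra. Qed.

(** * Integrals of complex functions of a real variable *)

Definition CInt (g : R -> C) (a b : R) : C :=
  (RInt (fun s => Re (g s)) a b, RInt (fun s => Im (g s)) a b).

Definition ex_CInt (g : R -> C) (a b : R) : Prop :=
  ex_RInt (fun s => Re (g s)) a b /\ ex_RInt (fun s => Im (g s)) a b.

Lemma CInt_ext f g a b : (forall x, Rmin a b < x < Rmax a b -> f x = g x) ->
  CInt f a b = CInt g a b.
Proof. intros H. unfold CInt. f_equal; apply RInt_ext; intros x Hx; now rewrite H. Qed.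

Lemma ex_CInt_ext f g a b : (forall x, Rmin a b < x < Rmax a b -> f x = g x) ->
  ex_CInt f a b -> ex_CInt g a b.
Proof.
  intros H [H1 H2].
  split; [eapply ex_RInt_ext; [|exact H1] | eapply ex_RInt_ext; [|exact H2]];
    intros x Hx; simpl; now rewrite H.
Qed.

Lemma ex_CInt_const c a b : ex_CInt (fun _ => c) a b.
Proof. split; apply (ex_RInt_const (V:=R_CompleteNormedModule)). Qed.

Lemma CInt_const c a b : CInt (fun _ => c) a b = (RtoC (b - a) * c)%C.
Proof.
  unfold CInt. rewrite !(RInt_const (V:=R_CompleteNormedModule)).
  apply injective_projections; simpl; unfold scal; simpl; unfold mult, Re, Im; simpl; ring.
Qed.

Lemma ex_CInt_plus f g a b : ex_CInt f a b -> ex_CInt g a b -> ex_CInt (fun s => f s + g s)%C a b.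
Proof.
  intros [H1 H2] [H3 H4].
  split; [exact (ex_RInt_plus (V:=R_CompleteNormedModule) _ _ _ _ H1 H3)
         |exact (ex_RInt_plus (V:=R_CompleteNormedModule) _ _ _ _ H2 H4)].
Qed.

Lemma ex_CInt_minus f g a b : ex_CInt f a b -> ex_CInt g a b -> ex_CInt (fun s => f s - g s)%C a b.
Proof.
  intros [H1 H2] [H3 H4].
  split; [exact (ex_RInt_minus (V:=R_CompleteNormedModule) _ _ _ _ H1 H3)
         |exact (ex_RInt_minus (V:=R_CompleteNormedModule) _ _ _ _ H2 H4)].
Qed.

Lemma CInt_plus f g a b : ex_CInt f a b -> ex_CInt g a b ->
  CInt (fun s => f s + g s)%C a b = (CInt f a b + CInt g a b)%C.
Proof.
  intros [H1 H2] [H3 H4]. unfold CInt.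
  apply injective_projections; simpl;
    [exact (RInt_plus (V:=R_CompleteNormedModule) _ _ _ _ H1 H3)
    |exact (RInt_plus (V:=R_CompleteNormedModule) _ _ _ _ H2 H4)].
Qed.

Lemma CInt_minus f g a b : ex_CInt f a b -> ex_CInt g a b ->
  CInt (fun s => f s - g s)%C a b = (CInt f a b - CInt g a b)%C.
Proof.
  intros [H1 H2] [H3 H4]. unfold CInt.
  apply injective_projections; simpl;
    [exact (RInt_minus (V:=R_CompleteNormedModule) _ _ _ _ H1 H3)
    |exact (RInt_minus (V:=R_CompleteNormedModule) _ _ _ _ H2 H4)].
Qed.

Lemma ex_CInt_cmul c g a b : ex_CInt g a b -> ex_CInt (fun s => c * g s)%C a b.
Proof.
  intros [H1 H2]. split.
  - eapply ex_RInt_ext. 2: apply (ex_RInt_minus (V:=R_CompleteNormedModule));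
      [apply (ex_RInt_scal (V:=R_CompleteNormedModule) _ _ _ (Re c) H1)|
       apply (ex_RInt_scal (V:=R_CompleteNormedModule) _ _ _ (Im c) H2)].
    intros x _. cbv beta. rewrite re_mult. reflexivity.
  - eapply ex_RInt_ext. 2: apply (ex_RInt_plus (V:=R_CompleteNormedModule));
      [apply (ex_RInt_scal (V:=R_CompleteNormedModule) _ _ _ (Re c) H2)|
       apply (ex_RInt_scal (V:=R_CompleteNormedModule) _ _ _ (Im c) H1)].
    intros x _. cbv beta. rewrite im_mult. reflexivity.
Qed.

Lemma CInt_cmul c g a b : ex_CInt g a b -> CInt (fun s => c * g s)%C a b = (c * CInt g a b)%C.
Proof.
  intros [H1 H2]. apply injective_projections.
  - change (Re (CInt (fun s => c * g s)%C a b) = Re (c * CInt g a b)%C).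
    rewrite re_mult. unfold CInt at 1 2 3. unfold Re at 1 3 5, Im at 2. cbn [fst snd].
    rewrite (RInt_ext _ (fun s => minus (scal (Re c) (Re (g s))) (scal (Im c) (Im (g s))))).
    2:{ intros x _. rewrite <- re_mult. reflexivity. }
    rewrite (RInt_minus (V:=R_CompleteNormedModule)).
    2: apply (ex_RInt_scal (V:=R_CompleteNormedModule) _ _ _ (Re c) H1).
    2: apply (ex_RInt_scal (V:=R_CompleteNormedModule) _ _ _ (Im c) H2).
    rewrite !(RInt_scal (V:=R_CompleteNormedModule)) by assumption. reflexivity.
  - change (Im (CInt (fun s => c * g s)%C a b) = Im (c * CInt g a b)%C).
    rewrite im_mult. unfold CInt at 1 2 3. unfold Im at 1 3, Re at 2 4. cbn [fst snd].
    rewrite (RInt_ext _ (fun s => plus (scal (Re c) (Im (g s))) (scal (Im c) (Re (g s))))).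
    2:{ intros x _. rewrite <- im_mult. reflexivity. }
    rewrite (RInt_plus (V:=R_CompleteNormedModule)).
    2: apply (ex_RInt_scal (V:=R_CompleteNormedModule) _ _ _ (Re c) H2).
    2: apply (ex_RInt_scal (V:=R_CompleteNormedModule) _ _ _ (Im c) H1).
    rewrite !(RInt_scal (V:=R_CompleteNormedModule)) by assumption. reflexivity.
Qed.

Lemma ex_CInt_Chasles_1 g a b c : a <= b <= c -> ex_CInt g a c -> ex_CInt g a b.
Proof.
  intros Hb [H1 H2].
  split; eapply (ex_RInt_Chasles_1 (V:=R_CompleteNormedModule)); eauto.
Qed.

Lemma ex_CInt_Chasles_2 g a b c : a <= b <= c -> ex_CInt g a c -> ex_CInt g b c.
Proof.
  intros Hb [H1 H2].
  split; eapply (ex_RInt_Chasles_2 (V:=R_CompleteNormedModule)); eauto.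
Qed.

Lemma CInt_Chasles g a b c : ex_CInt g a b -> ex_CInt g b c ->
  (CInt g a b + CInt g b c)%C = CInt g a c.
Proof.
  intros [H1 H2] [H3 H4]. unfold CInt. apply injective_projections; simpl.
  - exact (RInt_Chasles (V:=R_CompleteNormedModule) _ _ _ _ H1 H3).
  - exact (RInt_Chasles (V:=R_CompleteNormedModule) _ _ _ _ H2 H4).
Qed.

Lemma CInt_swap g a b : ex_CInt g a b -> CInt g b a = (- CInt g a b)%C.
Proof.
  intros [H1 H2]. unfold CInt.
  rewrite <- (opp_RInt_swap (V:=R_CompleteNormedModule) _ _ _ H1).
  rewrite <- (opp_RInt_swap (V:=R_CompleteNormedModule) _ _ _ H2).
  reflexivity.
Qed.

Lemma CInt_comp_lin g u v a b : ex_CInt g (u * a + v) (u * b + v) ->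
  CInt (fun y => RtoC u * g (u * y + v)%R)%C a b = CInt g (u * a + v) (u * b + v).
Proof.
  intros [H1 H2]. unfold CInt. f_equal.
  - rewrite <- (RInt_comp_lin (V:=R_CompleteNormedModule) _ _ _ _ _ H1).
    apply RInt_ext. intros x _. rewrite re_mult.
    unfold scal; simpl; unfold mult, Re, Im; simpl. ring.
  - rewrite <- (RInt_comp_lin (V:=R_CompleteNormedModule) _ _ _ _ _ H2).
    apply RInt_ext. intros x _. rewrite im_mult.
    unfold scal; simpl; unfold mult, Re, Im; simpl. ring.
Qed.

Lemma CInt_rescale g a b : ex_CInt g a b ->
  CInt g a b = CInt (fun s => RtoC (b - a) * g ((b - a) * s + a)%R)%C 0 1.
Proof.
  intros H. rewrite CInt_comp_lin; replace ((b - a) * 0 + a) with a by ring;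
    replace ((b - a) * 1 + a) with b by ring; easy.
Qed.

Lemma CInt_bound g a b B : a <= b -> ex_CInt g a b ->
  (forall s, a <= s <= b -> Cmod (g s) <= B) ->
  Cmod (CInt g a b) <= 2 * ((b - a) * B).
Proof.
  intros Hab [H1 H2] HB. eapply Rle_trans; [apply Cmod_le_Re_Im|]. unfold CInt.
  assert (A1 : Rabs (RInt (fun s => Re (g s)) a b) <= (b - a) * B).
  { apply abs_RInt_le_const; auto. intros s Hs.
    eapply Rle_trans; [apply re_le_Cmod | auto]. }
  assert (A2 : Rabs (RInt (fun s => Im (g s)) a b) <= (b - a) * B).
  { apply abs_RInt_le_const; auto. intros s Hs.
    eapply Rle_trans; [apply im_le_Cmod | auto]. }
  unfold Re at 1, Im at 1. simpl. lra.
Qed.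

Lemma Cmod_CInt_le g : ex_CInt g 0 1 -> ex_RInt (fun s => Cmod (g s)) 0 1 ->
  Cmod (CInt g 0 1) <= RInt (fun s => Cmod (g s)) 0 1.
Proof.
  (* [|I|^2 = int Re (conj I * g) <= |I| int |g|] for [I] the integral *)
  intros [H1 H2] H3.
  set (I := CInt g 0 1). set (R0 := RInt (fun s => Cmod (g s)) 0 1).
  assert (HR0 : 0 <= R0) by (apply RInt_ge_0; [lra|auto|intros; apply Cmod_ge_0]).
  pose proof (Cmod_ge_0 I) as HI.
  destruct (Req_dec (Cmod I) 0) as [E|E]; [lra|].
  assert (HA : RInt (fun s => Re (g s)) 0 1 = Re I) by reflexivity.
  assert (HB : RInt (fun s => Im (g s)) 0 1 = Im I) by reflexivity.
  assert (Hex : ex_RInt (fun s => Re I * Re (g s) + Im I * Im (g s)) 0 1).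
  { apply (ex_RInt_plus (V:=R_CompleteNormedModule)
             (fun s => scal (Re I) (Re (g s))) (fun s => scal (Im I) (Im (g s))));
    apply (ex_RInt_scal (V:=R_CompleteNormedModule)); auto. }
  assert (Key : RInt (fun s => Re I * Re (g s) + Im I * Im (g s)) 0 1 = Cmod I * Cmod I).
  { rewrite (RInt_plus (V:=R_CompleteNormedModule)
               (fun s => scal (Re I) (Re (g s))) (fun s => scal (Im I) (Im (g s))))
      by (apply (ex_RInt_scal (V:=R_CompleteNormedModule)); auto).
    rewrite !(RInt_scal (V:=R_CompleteNormedModule)) by auto.
    pose proof (Cmod2_alt I). unfold scal, plus; simpl; unfold mult; simpl.
    rewrite HA, HB. nra. }
  assert (Le : RInt (fun s => Re I * Re (g s) + Im I * Im (g s)) 0 1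
               <= RInt (fun s => scal (Cmod I) (Cmod (g s))) 0 1).
  { apply RInt_le; auto; [lra | apply (ex_RInt_scal (V:=R_CompleteNormedModule)); auto|].
    intros x _. unfold scal; simpl; unfold mult; simpl.
    rewrite <- (Cmod_conj I), <- Cmod_mult.
    eapply Rle_trans; [|apply re_le_Cmod]. eapply Rle_trans; [|apply Rle_abs].
    rewrite re_mult, re_conj, im_conj, ?HA, ?HB. lra. }
  rewrite (RInt_scal (V:=R_CompleteNormedModule)) in Le by auto.
  rewrite Key in Le. fold R0 in Le. unfold scal in Le; simpl in Le; unfold mult in Le; simpl in Le.
  nra.
Qed.

Definition Rcontinuous_C (g : R -> C) (s : R) : Prop :=
  forall eps, 0 < eps -> exists d, 0 < d /\
    forall s', Rabs (s' - s) < d -> Cmod (g s' - g s)%C < eps.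

Lemma continuous_of_Rcontinuous_C (g : R -> C) (F : C -> R) s :
  (forall a b, Rabs (F a - F b) <= Cmod (a - b)%C) -> Rcontinuous_C g s ->
  continuous (fun s => F (g s)) s.
Proof.
  intros HF Hc. apply continuity_pt_filterlim.
  intros eps Heps. destruct (Hc eps Heps) as [d [Hd H]].
  exists d. split; auto. intros x [_ Hx]. simpl in *. unfold R_dist in *.
  eapply Rle_lt_trans; [apply HF | now apply H].
Qed.

Lemma ex_CInt_continuous g a b : a <= b -> (forall s, a <= s <= b -> Rcontinuous_C g s) ->
  ex_CInt g a b.
Proof.
  intros Hab H. split; apply (ex_RInt_continuous (V:=R_CompleteNormedModule));
    rewrite Rmin_left, Rmax_right by lra; intros z Hz;
    apply (continuous_of_Rcontinuous_C g); auto; intros.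
  - rewrite <- re_minus. apply re_le_Cmod.
  - rewrite <- im_minus. apply im_le_Cmod.
Qed.

Lemma ex_RInt_Cmod_continuous g a b : a <= b ->
  (forall s, a <= s <= b -> Rcontinuous_C g s) -> ex_RInt (fun s => Cmod (g s)) a b.
Proof.
  intros Hab H. apply (ex_RInt_continuous (V:=R_CompleteNormedModule)).
  rewrite Rmin_left, Rmax_right by lra. intros z Hz.
  apply (continuous_of_Rcontinuous_C g Cmod); auto. apply Cmod_sub_rev_triangle.
Qed.

(** * Complex differentiability *)

Definition Ccontinuous (h : C -> C) (z : C) : Prop :=
  forall eps, 0 < eps -> exists d, 0 < d /\
    forall w, Cmod (w - z)%C < d -> Cmod (h w - h z)%C < eps.

Definition continuous_disc (h : C -> C) : Prop := forall w, in_disc w -> Ccontinuous h w.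

Definition Cdiff (h : C -> C) (z l : C) : Prop :=
  forall eps, 0 < eps -> exists d, 0 < d /\
    forall w, Cmod (w - z)%C < d ->
      Cmod ((h w - h z) - (w - z) * l)%C <= eps * Cmod (w - z)%C.

Lemma Cdiff_is_derive h z l : is_derive h z l <-> Cdiff h z l.
Proof.
  split.
  - intros [_ Hd] eps Heps.
    destruct (Hd z (fun P H => H) (mkposreal eps Heps)) as [d Hd'].
    exists d. split; [apply cond_pos | intros w Hw; exact (Hd' w Hw)].
  - intros H. split; [apply is_linear_scal_l|].
    intros x Hx. apply is_filter_lim_locally_close in Hx.
    assert (Hxz : x = z).
    { apply Ceq_minus, Cmod_eq_0.
      destruct (Rle_lt_or_eq_dec 0 _ (Cmod_ge_0 (x - z)%C)) as [Hp|Hp]; [|auto].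
      specialize (Hx (mkposreal _ Hp)). simpl in Hx.
      change (Cmod (x - z)%C < Cmod (x - z)%C) in Hx. lra. }
    subst x. intros eps.
    destruct (H eps (cond_pos eps)) as [d [Hd H']].
    exists (mkposreal d Hd). intros y Hy. now apply H'.
Qed.

Lemma Ccontinuous_Cdiff h z l : Cdiff h z l -> Ccontinuous h z.
Proof.
  intros H eps Heps. destruct (H 1 Rlt_0_1) as [d [Hd H1]].
  pose proof (Cmod_ge_0 l).
  exists (Rmin d (eps / (Cmod l + 2))). split.
  { apply Rmin_pos; auto. apply Rdiv_lt_0_compat; lra. }
  intros w Hw.
  assert (Hw1 : Cmod (w - z)%C < d) by (eapply Rlt_le_trans; [exact Hw | apply Rmin_l]).
  assert (Hw2 : Cmod (w - z)%C * (Cmod l + 2) < eps).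
  { apply Rlt_le_trans with (eps / (Cmod l + 2) * (Cmod l + 2)).
    - apply Rmult_lt_compat_r; [lra|]. eapply Rlt_le_trans; [exact Hw | apply Rmin_r].
    - right. field. lra. }
  specialize (H1 w Hw1).
  pose proof (Cmod_triangle ((h w - h z) - (w - z) * l)%C ((w - z) * l)%C) as Htri.
  replace ((h w - h z) - (w - z) * l + (w - z) * l)%C with (h w - h z)%C in Htri by ring.
  rewrite Cmod_mult in Htri. pose proof (Cmod_ge_0 (w - z)%C). nra.
Qed.

Lemma holo_continuous_disc h : holo_disc h -> continuous_disc h.
Proof.
  intros H w Hw. destruct (H w Hw) as [l Hl].
  apply (Ccontinuous_Cdiff h w l). now apply Cdiff_is_derive.
Qed.

Lemma Ccontinuous_sub_affine h c0 L w z : Ccontinuous h z ->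
  Ccontinuous (fun x => h x - (c0 + (x - w) * L))%C z.
Proof.
  intros H eps Heps. destruct (H (eps / 2)) as [d [Hd H1]]; [lra|].
  pose proof (Cmod_ge_0 L).
  exists (Rmin d (eps / (2 * (Cmod L + 1)))). split.
  { apply Rmin_pos; auto. apply Rdiv_lt_0_compat; lra. }
  intros x Hx.
  assert (Hx1 : Cmod (x - z)%C < d) by (eapply Rlt_le_trans; [exact Hx | apply Rmin_l]).
  assert (Hx2 : Cmod (x - z)%C * (2 * (Cmod L + 1)) < eps).
  { apply Rlt_le_trans with (eps / (2 * (Cmod L + 1)) * (2 * (Cmod L + 1))).
    - apply Rmult_lt_compat_r; [lra|]. eapply Rlt_le_trans; [exact Hx | apply Rmin_r].
    - right. field. lra. }
  replace (h x - (c0 + (x - w) * L) - (h z - (c0 + (z - w) * L)))%C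
    with ((h x - h z) + - ((x - z) * L))%C by ring.
  eapply Rle_lt_trans; [apply Cmod_triangle|]. rewrite Cmod_opp, Cmod_mult.
  specialize (H1 x Hx1). pose proof (Cmod_ge_0 (x - z)%C). nra.
Qed.

Lemma is_derive_affine a k z : is_derive (fun w => a + k * w)%C z k.
Proof.
  apply Cdiff_is_derive. intros eps Heps. exists 1. split; [lra|]. intros w _.
  replace (a + k * w - (a + k * z) - (w - z) * k)%C with (RtoC 0) by ring.
  rewrite Cmod_0. pose proof (Cmod_ge_0 (w - z)%C). nra.
Qed.

Lemma is_derive_Cinv z : z <> RtoC 0 -> is_derive Cinv z (- / (z * z))%C.
Proof.
  intros Hz. apply Cdiff_is_derive. intros eps Heps.
  set (m := Cmod z). assert (Hm : 0 < m) by now apply Cmod_gt_0.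
  exists (Rmin (m / 2) (eps * (m * m * m) / 2)). split.
  { apply Rmin_pos; [lra|]. apply Rdiv_lt_0_compat; [|lra].
    repeat apply Rmult_lt_0_compat; auto. }
  intros w Hw. set (x := Cmod (w - z)%C). pose proof (Cmod_ge_0 (w - z)%C) as Hx0.
  assert (Hx1 : x < m / 2) by (eapply Rlt_le_trans; [exact Hw | apply Rmin_l]).
  assert (Hx2 : x < eps * (m * m * m) / 2) by (eapply Rlt_le_trans; [exact Hw | apply Rmin_r]).
  assert (Hwm : m / 2 <= Cmod w).
  { pose proof (Cmod_rev_triangle z (w - z)%C) as H.
    replace (z + (w - z))%C with w in H by ring. fold m x in H. lra. }
  assert (Hw0 : w <> RtoC 0) by (intro E; rewrite E, Cmod_0 in Hwm; lra).
  replace (/ w - / z - (w - z) * - / (z * z))%C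
    with ((w - z) * (w - z) * / (w * (z * z)))%C by (field; auto).
  rewrite !Cmod_mult, Cmod_inv by (repeat apply Cmult_neq_0; auto).
  rewrite !Cmod_mult. fold m x.
  assert (0 < m * m * m) by (repeat apply Rmult_lt_0_compat; auto).
  apply Rle_trans with (x * x * / (m / 2 * (m * m))).
  { apply Rmult_le_compat_l; [nra|]. apply Rinv_le_contravar; [nra|].
    apply Rmult_le_compat_r; nra. }
  replace (x * x * / (m / 2 * (m * m))) with (x * (2 * x / (m * m * m))) by (field; lra).
  rewrite (Rmult_comm eps x). apply Rmult_le_compat_l; auto.
  apply Rmult_le_reg_r with (m * m * m); auto.
  unfold Rdiv. rewrite Rmult_assoc, Rinv_l by lra. nra.
Qed.

Lemma is_derive_ext_ball F G z l r : 0 < r ->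
  (forall w, Cmod (w - z)%C < r -> F w = G w) ->
  @is_derive C_AbsRing C_NormedModule F z l -> @is_derive C_AbsRing C_NormedModule G z l.
Proof.
  intros Hr HFG. apply is_derive_ext_loc.
  exists (mkposreal r Hr). intros w Hw. now apply HFG.
Qed.

(* [is_derive_mult] is stated over [AbsRing_NormedModule C_AbsRing], whose uniform
   structure is not that of [C_NormedModule] *)
Lemma is_derive_C_AbsRing f z l :
  @is_derive C_AbsRing C_NormedModule f z l <->
  @is_derive C_AbsRing (AbsRing_NormedModule C_AbsRing) f z l.
Proof.
  split; intros [_ H]; split; try apply is_linear_scal_l; intros x Hx; exact (H x Hx).
Qed.

Lemma Rcontinuous_C_seg h p q s : Ccontinuous h (p + RtoC s * (q - p))%C ->
  Rcontinuous_C (fun s => h (p + RtoC s * (q - p))%C) s.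
Proof.
  intros H eps Heps. destruct (H eps Heps) as [d [Hd H1]].
  pose proof (Cmod_ge_0 (q - p)%C).
  exists (d / (Cmod (q - p)%C + 1)). split; [apply Rdiv_lt_0_compat; lra|].
  intros s' Hs'. apply H1.
  replace (p + RtoC s' * (q - p) - (p + RtoC s * (q - p)))%C with (RtoC (s' - s) * (q - p))%C
    by (rewrite RtoC_minus; ring).
  rewrite Cmod_mult, Cmod_R. pose proof (Rabs_pos (s' - s)).
  apply Rle_lt_trans with (Rabs (s' - s) * (Cmod (q - p)%C + 1)); [nra|].
  apply Rlt_le_trans with (d / (Cmod (q - p)%C + 1) * (Cmod (q - p)%C + 1)).
  - apply Rmult_lt_compat_r; lra.
  - right. field. lra.
Qed.

(** * Goursat's lemma *)

Definition line_int (h : C -> C) (p q : C) : C :=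
  ((q - p) * CInt (fun s => h (p + RtoC s * (q - p))%C) 0 1)%C.

Definition midpoint (p q : C) : C := (p + RtoC (/2) * (q - p))%C.

Definition tri_int (h : C -> C) (a b c : C) : C :=
  (line_int h a b + line_int h b c + line_int h c a)%C.

Lemma ex_CInt_seg h p q : continuous_disc h -> in_disc p -> in_disc q ->
  ex_CInt (fun s => h (p + RtoC s * (q - p))%C) 0 1.
Proof.
  intros Hh Hp Hq. apply ex_CInt_continuous; [lra|]. intros s Hs.
  apply Rcontinuous_C_seg, Hh. now apply Cmod_convex_lt.
Qed.

Lemma midpoint_in_disc p q : in_disc p -> in_disc q -> in_disc (midpoint p q).
Proof. intros. apply Cmod_convex_lt; auto; lra. Qed.

Lemma Cmod_midpoint_le p q r : Cmod p <= r -> Cmod q <= r -> Cmod (midpoint p q) <= r.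
Proof. intros. apply Cmod_convex; auto; lra. Qed.

Lemma line_int_rev h p q : continuous_disc h -> in_disc p -> in_disc q ->
  line_int h q p = (- line_int h p q)%C.
Proof.
  intros Hc Hp Hq. unfold line_int.
  set (g := fun s => h (p + RtoC s * (q - p))%C).
  assert (Hok : ex_CInt g 0 1) by now apply ex_CInt_seg.
  assert (Hok' : ex_CInt g 1 0)
    by (destruct Hok; split; now apply (ex_RInt_swap (V:=R_CompleteNormedModule))).
  assert (E : CInt (fun s => h (q + RtoC s * (p - q))%C) 0 1 = CInt g 0 1).
  { transitivity (- CInt g 1 0)%C; [|rewrite (CInt_swap g 0 1 Hok); ring].
    rewrite (CInt_rescale g 1 0 Hok').
    rewrite (CInt_ext (fun s => RtoC (0 - 1) * g ((0 - 1) * s + 1)%R)%C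
                      (fun s => RtoC (-1) * h (q + RtoC s * (p - q)))%C).
    - rewrite CInt_cmul by now apply ex_CInt_seg. ring.
    - intros x _. unfold g. replace (0 - 1) with (-1) by ring. do 2 f_equal.
      apply injective_projections; simpl; ring. }
  rewrite E. ring.
Qed.

Lemma line_int_split_midpoint h p q : continuous_disc h -> in_disc p -> in_disc q ->
  line_int h p q = (line_int h p (midpoint p q) + line_int h (midpoint p q) q)%C.
Proof.
  intros Hc Hp Hq.
  assert (Hm := midpoint_in_disc p q Hp Hq).
  set (g := fun s => h (p + RtoC s * (q - p))%C).
  assert (Hok : ex_CInt g 0 1) by now apply ex_CInt_seg.
  assert (Hok1 : ex_CInt g 0 (/2)) by (eapply ex_CInt_Chasles_1; [|exact Hok]; lra).
  assert (Hok2 : ex_CInt g (/2) 1) by (eapply ex_CInt_Chasles_2; [|exact Hok]; lra).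
  assert (E1 : CInt g 0 (/2)
               = (RtoC (/2) * CInt (fun s => h (p + RtoC s * (midpoint p q - p))%C) 0 1)%C).
  { rewrite (CInt_rescale g 0 (/2) Hok1), <- CInt_cmul by now apply ex_CInt_seg.
    apply CInt_ext. intros x _. unfold g, midpoint. rewrite Rminus_0_r. do 2 f_equal.
    apply injective_projections; simpl; field. }
  assert (E2 : CInt g (/2) 1
               = (RtoC (/2)
                  * CInt (fun s => h (midpoint p q + RtoC s * (q - midpoint p q))%C) 0 1)%C).
  { rewrite (CInt_rescale g (/2) 1 Hok2), <- CInt_cmul by now apply ex_CInt_seg.
    apply CInt_ext. intros x _. unfold g, midpoint. replace (1 - /2) with (/2) by field.
    do 2 f_equal. apply injective_projections; simpl; field. }
  unfold line_int at 1. fold g.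
  rewrite <- (CInt_Chasles g 0 (/2) 1 Hok1 Hok2), E1, E2.
  unfold line_int, midpoint. apply injective_projections; simpl; field.
Qed.

Lemma tri_int_subdiv h a b c : continuous_disc h -> in_disc a -> in_disc b -> in_disc c ->
  tri_int h a b c =
    (tri_int h a (midpoint a b) (midpoint c a) + tri_int h (midpoint a b) b (midpoint b c)
     + tri_int h (midpoint c a) (midpoint b c) c
     + tri_int h (midpoint a b) (midpoint b c) (midpoint c a))%C.
Proof.
  intros Hc Ha Hb Hcc.
  assert (Hab := midpoint_in_disc a b Ha Hb).
  assert (Hbc := midpoint_in_disc b c Hb Hcc).
  assert (Hca := midpoint_in_disc c a Hcc Ha).
  unfold tri_int.
  rewrite (line_int_split_midpoint h a b), (line_int_split_midpoint h b c),
    (line_int_split_midpoint h c a) by auto.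
  rewrite (line_int_rev h (midpoint c a) (midpoint a b)),
    (line_int_rev h (midpoint a b) (midpoint b c)),
    (line_int_rev h (midpoint b c) (midpoint c a)) by auto.
  ring.
Qed.

Lemma CInt_id : CInt (fun s => RtoC s) 0 1 = RtoC (/2).
Proof.
  assert (Hid : RInt (fun s => s) 0 1 = /2).
  { apply is_RInt_unique.
    assert (H := is_RInt_derive (V:=R_CompleteNormedModule) (fun s => s * s / 2) (fun s => s) 0 1).
    replace (/2) with (@minus R_AbelianGroup ((fun s => s * s / 2) 1) ((fun s => s * s / 2) 0))
      by (unfold minus, plus, opp; simpl; field).
    apply H.
    - intros x _. auto_derive; [auto | field].
    - intros x _. apply continuous_id. }
  unfold CInt.
  rewrite (RInt_ext (fun s => Re (RtoC s)) (fun s => s)) by reflexivity.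
  rewrite (RInt_ext (fun s => Im (RtoC s)) (fun s => 0)) by reflexivity.
  rewrite Hid, (RInt_const (V:=R_CompleteNormedModule)).
  unfold scal; simpl; unfold mult; simpl.
  apply injective_projections; simpl; ring.
Qed.

Lemma ex_CInt_id : ex_CInt (fun s => RtoC s) 0 1.
Proof.
  split.
  - apply (ex_RInt_continuous (V:=R_CompleteNormedModule)). intros; apply continuous_id.
  - apply (ex_RInt_const (V:=R_CompleteNormedModule) 0 1 0).
Qed.

Lemma CInt_affine A B : CInt (fun s => A + RtoC s * B)%C 0 1 = (A + RtoC (/2) * B)%C.
Proof.
  rewrite (CInt_ext _ (fun s => (fun _ => A) s + B * RtoC s)%C)
    by (intros x _; cbv beta; ring).
  rewrite (CInt_plus _ _ _ _ (ex_CInt_const _ _ _) (ex_CInt_cmul _ _ _ _ ex_CInt_id)).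
  rewrite CInt_const, (CInt_cmul _ _ _ _ ex_CInt_id), CInt_id.
  rewrite Rminus_0_r. ring.
Qed.

Lemma RtoC_half : RtoC (/2) = (/ (1 + 1))%C.
Proof. rewrite <- RtoC_plus, RtoC_inv by lra. reflexivity. Qed.

Lemma line_int_sub_affine h c0 L w p q : continuous_disc h -> in_disc p -> in_disc q ->
  line_int (fun x => h x - (c0 + (x - w) * L))%C p q
  = (line_int h p q - (q - p) * (c0 + (midpoint p q - w) * L))%C.
Proof.
  intros Hh Hp Hq. unfold line_int.
  set (A := (c0 + (p - w) * L)%C). set (B := ((q - p) * L)%C).
  assert (HA : ex_CInt (fun s => A + RtoC s * B)%C 0 1).
  { apply (ex_CInt_ext (fun s => (fun _ => A) s + B * RtoC s)%C);
      [intros x _; cbv beta; ring|].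
    apply ex_CInt_plus; [apply ex_CInt_const | apply ex_CInt_cmul, ex_CInt_id]. }
  rewrite (CInt_ext _ (fun s => h (p + RtoC s * (q - p)) - (A + RtoC s * B))%C)
    by (intros x _; unfold A, B; ring).
  rewrite CInt_minus, CInt_affine by (auto using ex_CInt_seg).
  unfold A, B, midpoint. ring.
Qed.

(* affine functions have the primitive [c0 x + L (x - w)^2 / 2], so their boundary
   integral vanishes *)
Lemma tri_int_sub_affine h c0 L w a b c : continuous_disc h ->
  in_disc a -> in_disc b -> in_disc c ->
  tri_int (fun x => h x - (c0 + (x - w) * L))%C a b c = tri_int h a b c.
Proof.
  intros Hh Ha Hb Hc. unfold tri_int. rewrite !line_int_sub_affine by auto.
  unfold midpoint. rewrite RtoC_half. field.
Qed.

Lemma line_int_bound g p q B : continuous_disc g -> in_disc p -> in_disc q ->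
  (forall s, 0 <= s <= 1 -> Cmod (g (p + RtoC s * (q - p))%C) <= B) ->
  Cmod (line_int g p q) <= Cmod (q - p)%C * (2 * B).
Proof.
  intros Hg Hp Hq HB. unfold line_int. rewrite Cmod_mult.
  apply Rmult_le_compat_l; [apply Cmod_ge_0|].
  replace (2 * B) with (2 * ((1 - 0) * B)) by ring.
  apply CInt_bound; [lra | now apply ex_CInt_seg | exact HB].
Qed.

Definition tri_int3 (h : C -> C) (T : C * C * C) : C :=
  let '(a, b, c) := T in tri_int h a b c.

Definition perimeter (T : C * C * C) : R :=
  let '(a, b, c) := T in Cmod (a - b)%C + Cmod (b - c)%C + Cmod (c - a)%C.

Definition first_vertex (T : C * C * C) : C := let '(a, _, _) := T in a.

Definition in_cball (r : R) (T : C * C * C) : Prop :=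
  let '(a, b, c) := T in Cmod a <= r /\ Cmod b <= r /\ Cmod c <= r.

Definition goursat_step (h : C -> C) (T : C * C * C) : C * C * C :=
  let '(a, b, c) := T in
  let q := Cmod (tri_int h a b c) / 4 in
  if Rle_dec q (Cmod (tri_int h a (midpoint a b) (midpoint c a)))
  then (a, midpoint a b, midpoint c a)
  else if Rle_dec q (Cmod (tri_int h (midpoint a b) b (midpoint b c)))
  then (midpoint a b, b, midpoint b c)
  else if Rle_dec q (Cmod (tri_int h (midpoint c a) (midpoint b c) c))
  then (midpoint c a, midpoint b c, c)
  else (midpoint a b, midpoint b c, midpoint c a).

Lemma in_cball_goursat_step h r T : in_cball r T -> in_cball r (goursat_step h T).
Proof.
  destruct T as [[a b] c]. intros [Ha [Hb Hc]]. unfold goursat_step.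
  repeat destruct Rle_dec; simpl; repeat split; auto; apply Cmod_midpoint_le; auto.
Qed.

Lemma Cmod_sub_half x y u v : (x - y = RtoC (/2) * (u - v))%C ->
  Cmod (x - y)%C = / 2 * Cmod (u - v)%C.
Proof. intros H. rewrite H, Cmod_mult, Cmod_RtoC by lra. reflexivity. Qed.

Ltac Cfield := apply injective_projections; simpl; field.

Lemma perimeter_goursat_step h T : perimeter (goursat_step h T) = perimeter T / 2.
Proof.
  destruct T as [[a b] c]. unfold goursat_step.
  pose proof (Cmod_sub_sym a b). pose proof (Cmod_sub_sym b c). pose proof (Cmod_sub_sym c a).
  repeat destruct Rle_dec; simpl.
  - rewrite (Cmod_sub_half a (midpoint a b) a b), (Cmod_sub_half (midpoint a b) (midpoint c a) b c),
      (Cmod_sub_half (midpoint c a) a c a) by (unfold midpoint; Cfield). lra.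
  - rewrite (Cmod_sub_half (midpoint a b) b a b), (Cmod_sub_half b (midpoint b c) b c),
      (Cmod_sub_half (midpoint b c) (midpoint a b) c a) by (unfold midpoint; Cfield). lra.
  - rewrite (Cmod_sub_half (midpoint c a) (midpoint b c) a b), (Cmod_sub_half (midpoint b c) c b c),
      (Cmod_sub_half c (midpoint c a) c a) by (unfold midpoint; Cfield). lra.
  - rewrite (Cmod_sub_half (midpoint a b) (midpoint b c) a c),
      (Cmod_sub_half (midpoint b c) (midpoint c a) b a),
      (Cmod_sub_half (midpoint c a) (midpoint a b) c b) by (unfold midpoint; Cfield).
    rewrite (Cmod_sub_sym a c), (Cmod_sub_sym b a), (Cmod_sub_sym c b). lra.
Qed.

Lemma tri_int_goursat_step h T r : continuous_disc h -> r < 1 -> in_cball r T ->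
  Cmod (tri_int3 h T) <= 4 * Cmod (tri_int3 h (goursat_step h T)).
Proof.
  destruct T as [[a b] c]. intros Hh Hr [Ha [Hb Hc]]. unfold goursat_step.
  assert (E := tri_int_subdiv h a b c Hh ltac:(red; lra) ltac:(red; lra) ltac:(red; lra)).
  set (T1 := tri_int h a (midpoint a b) (midpoint c a)) in *.
  set (T2 := tri_int h (midpoint a b) b (midpoint b c)) in *.
  set (T3 := tri_int h (midpoint c a) (midpoint b c) c) in *.
  set (T4 := tri_int h (midpoint a b) (midpoint b c) (midpoint c a)) in *.
  assert (Hs : Cmod (tri_int h a b c) <= Cmod T1 + Cmod T2 + Cmod T3 + Cmod T4).
  { rewrite E. eapply Rle_trans; [apply Cmod_triangle|].
    eapply Rle_trans; [apply Rplus_le_compat_r, Cmod_triangle|].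
    eapply Rle_trans; [apply Rplus_le_compat_r, Rplus_le_compat_r, Cmod_triangle|]. lra. }
  simpl. repeat destruct Rle_dec; simpl; fold T1 T2 T3 T4; lra.
Qed.

Lemma first_vertex_goursat_step h T :
  Cmod (first_vertex (goursat_step h T) - first_vertex T)%C <= perimeter T.
Proof.
  destruct T as [[a b] c]. unfold goursat_step.
  pose proof (Cmod_ge_0 (a - b)%C). pose proof (Cmod_ge_0 (b - c)%C).
  pose proof (Cmod_ge_0 (c - a)%C). pose proof (Cmod_sub_sym a b).
  repeat destruct Rle_dec; simpl.
  - replace (a - a)%C with (RtoC 0) by ring. rewrite Cmod_0. lra.
  - rewrite (Cmod_sub_half (midpoint a b) a b a) by (unfold midpoint; Cfield). lra.
  - rewrite (Cmod_sub_half (midpoint c a) a c a) by (unfold midpoint; Cfield). lra.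
  - rewrite (Cmod_sub_half (midpoint a b) a b a) by (unfold midpoint; Cfield). lra.
Qed.

Definition goursat_iter (h : C -> C) (T : C * C * C) (n : nat) : C * C * C :=
  Nat.iter n (goursat_step h) T.

Lemma goursat_iter_spec h r T n : continuous_disc h -> r < 1 -> in_cball r T ->
  in_cball r (goursat_iter h T n) /\
  perimeter (goursat_iter h T n) = perimeter T * (/2) ^ n /\
  Cmod (tri_int3 h T) <= 4 ^ n * Cmod (tri_int3 h (goursat_iter h T n)).
Proof.
  intros Hh Hr HT. induction n as [|n [IH1 [IH2 IH3]]]; simpl.
  - repeat split; auto; lra.
  - change (Nat.iter n (goursat_step h) T) with (goursat_iter h T n).
    split; [now apply in_cball_goursat_step|]. split.
    + rewrite perimeter_goursat_step, IH2. field.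
    + eapply Rle_trans; [exact IH3|]. rewrite (Rmult_comm 4 (4 ^ n)), Rmult_assoc.
      apply Rmult_le_compat_l; [apply pow_le; lra|].
      eapply tri_int_goursat_step; eauto.
Qed.

Lemma geom_half_small P0 e : 0 <= P0 -> 0 < e ->
  exists N, forall n, (n >= N)%nat -> P0 * (/2) ^ n < e.
Proof.
  intros HP He.
  destruct (pow_lt_1_zero (/2) ltac:(rewrite Rabs_pos_eq; lra) (e / (P0 + 1)))
    as [N HN]; [apply Rdiv_lt_0_compat; lra|].
  exists N. intros n Hn. specialize (HN n Hn).
  rewrite Rabs_pos_eq in HN by (apply pow_le; lra).
  assert (0 < (/2) ^ n) by (apply pow_lt; lra).
  apply Rle_lt_trans with ((P0 + 1) * (/2) ^ n); [nra|].
  apply Rlt_le_trans with ((P0 + 1) * (e / (P0 + 1))).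
  - apply Rmult_lt_compat_l; lra.
  - right. field. lra.
Qed.

Lemma C_halving_limit (u : nat -> C) P0 : 0 <= P0 ->
  (forall n, Cmod (u (S n) - u n)%C <= P0 * (/2) ^ n) ->
  exists w, forall n, Cmod (w - u n)%C <= 4 * (P0 * (/2) ^ n).
Proof.
  intros HP0 Hu. set (P := fun n => P0 * (/2) ^ n).
  assert (HP : forall n, 0 <= P n) by (intros; apply Rmult_le_pos; [lra | apply pow_le; lra]).
  assert (Htel : forall n k, Cmod (u (n + k)%nat - u n)%C <= 2 * P n - 2 * P (n + k)%nat).
  { intros n k. induction k.
    - rewrite Nat.add_0_r. replace (u n - u n)%C with (RtoC 0) by ring. rewrite Cmod_0. lra.
    - rewrite Nat.add_succ_r.
      eapply Rle_trans; [apply (Cmod_sub_triangle _ (u (n + k)%nat))|].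
      assert (P (S (n + k)) = P (n + k)%nat / 2) by (unfold P; simpl; field).
      pose proof (Hu (n + k)%nat). fold (P (n + k)%nat) in *. lra. }
  assert (Hlim : forall F : C -> R, (forall x y, Rabs (F x - F y) <= Cmod (x - y)%C) ->
            exists l, forall n, Rabs (l - F (u n)) <= 2 * P n).
  { intros F HF.
    assert (Hc : Cauchy_crit (fun n => F (u n))).
    { intros e He. destruct (geom_half_small P0 (e / 2)) as [N HN]; [lra | lra |].
      exists N. intros n m Hn Hm. unfold R_dist.
      destruct (Nat.le_ge_cases n m) as [Hnm | Hnm].
      - replace m with (n + (m - n))%nat by lia. rewrite Rabs_minus_sym.
        eapply Rle_lt_trans; [apply HF|]. eapply Rle_lt_trans; [apply Htel|].
        specialize (HN n Hn). pose proof (HP (n + (m - n))%nat). fold (P n) in HN. lra.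
      - replace n with (m + (n - m))%nat by lia.
        eapply Rle_lt_trans; [apply HF|]. eapply Rle_lt_trans; [apply Htel|].
        specialize (HN m Hm). pose proof (HP (m + (n - m))%nat). fold (P m) in HN. lra. }
    destruct (Rcomplete.R_complete _ Hc) as [l Hl]. exists l. intros n.
    apply Rle_plus_epsilon. intros e He.
    destruct (Hl e He) as [N HN]. specialize (HN (n + N)%nat ltac:(lia)). unfold R_dist in HN.
    pose proof (HF (u (n + N)%nat) (u n)). pose proof (Htel n N). pose proof (HP (n + N)%nat).
    replace (l - F (u n)) with ((F (u (n + N)%nat) - F (u n)) - (F (u (n + N)%nat) - l)) by ring.
    eapply Rle_trans; [apply Rabs_triang|]. rewrite Rabs_Ropp. lra. }
  destruct (Hlim Re) as [lr Hlr]; [intros; rewrite <- re_minus; apply re_le_Cmod|].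
  destruct (Hlim Im) as [li Hli]; [intros; rewrite <- im_minus; apply im_le_Cmod|].
  exists (lr, li). intros n.
  eapply Rle_trans; [apply Cmod_le_Re_Im|]. rewrite re_minus, im_minus.
  pose proof (Hlr n). pose proof (Hli n). unfold Re at 1, Im at 1. simpl. fold (P n). lra.
Qed.

Lemma tri_int_near_point h w L eps d a b c : continuous_disc h ->
  in_disc a -> in_disc b -> in_disc c -> 0 < eps ->
  (forall x, Cmod (x - w)%C < d -> Cmod (h x - h w - (x - w) * L)%C <= eps * Cmod (x - w)%C) ->
  Cmod (w - a)%C <= 4 * perimeter (a, b, c) -> 5 * perimeter (a, b, c) < d ->
  Cmod (tri_int h a b c) <= 10 * eps * (perimeter (a, b, c) * perimeter (a, b, c)).
Proof.
  intros Hh Ha Hb Hc Heps Hdiff Hwa Hd.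
  set (P := perimeter (a, b, c)) in *.
  assert (HP : P = Cmod (a - b)%C + Cmod (b - c)%C + Cmod (c - a)%C) by reflexivity.
  pose proof (Cmod_ge_0 (a - b)%C). pose proof (Cmod_ge_0 (b - c)%C).
  pose proof (Cmod_ge_0 (c - a)%C).
  set (g := fun x => (h x - (h w + (x - w) * L))%C).
  rewrite <- (tri_int_sub_affine h (h w) L w a b c) by auto. fold g.
  assert (Hg : continuous_disc g) by (intros z Hz; apply Ccontinuous_sub_affine, Hh, Hz).
  assert (Hpt : forall p q s, Cmod (p - a)%C <= P -> Cmod (q - a)%C <= P -> 0 <= s <= 1 ->
             Cmod (g (p + RtoC s * (q - p))%C) <= eps * (5 * P)).
  { intros p q s Hp Hq Hs. set (x := (p + RtoC s * (q - p))%C).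
    assert (Hx : Cmod (x - a)%C <= P).
    { unfold x. replace (p + RtoC s * (q - p) - a)%C
        with ((p - a) + RtoC s * ((q - a) - (p - a)))%C by ring.
      now apply Cmod_convex. }
    assert (Hxw : Cmod (x - w)%C <= 5 * P).
    { pose proof (Cmod_sub_triangle x a w). rewrite (Cmod_sub_sym a w) in H2. lra. }
    unfold g. replace (h x - (h w + (x - w) * L))%C with (h x - h w - (x - w) * L)%C by ring.
    eapply Rle_trans; [apply Hdiff; lra|]. apply Rmult_le_compat_l; lra. }
  assert (Haa : Cmod (a - a)%C <= P)
    by (replace (a - a)%C with (RtoC 0) by ring; rewrite Cmod_0; lra).
  assert (Hba : Cmod (b - a)%C <= P) by (rewrite Cmod_sub_sym; lra).
  assert (Hca : Cmod (c - a)%C <= P) by lra.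
  pose proof (line_int_bound g a b _ Hg Ha Hb (fun s Hs => Hpt a b s Haa Hba Hs)).
  pose proof (line_int_bound g b c _ Hg Hb Hc (fun s Hs => Hpt b c s Hba Hca Hs)).
  pose proof (line_int_bound g c a _ Hg Hc Ha (fun s Hs => Hpt c a s Hca Haa Hs)).
  rewrite (Cmod_sub_sym b a), (Cmod_sub_sym c b), (Cmod_sub_sym a c) in *.
  unfold tri_int.
  eapply Rle_trans; [apply Cmod_triangle|].
  eapply Rle_trans; [apply Rplus_le_compat_r, Cmod_triangle|].
  assert (0 <= P) by lra. nra.
Qed.

Lemma Rle_0_of_le_eps x K : (forall eps, 0 < eps -> x <= eps * K) -> x <= 0.
Proof.
  intros H. apply Rle_plus_epsilon. intros e He.
  pose proof (Rabs_pos K). pose proof (Rle_abs K).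
  assert (Hk : 0 < e / (Rabs K + 1)) by (apply Rdiv_lt_0_compat; lra).
  specialize (H _ Hk).
  assert (e / (Rabs K + 1) * K <= e / (Rabs K + 1) * (Rabs K + 1))
    by (apply Rmult_le_compat_l; lra).
  replace (e / (Rabs K + 1) * (Rabs K + 1)) with e in * by (field; lra). lra.
Qed.

Lemma pow4_half_sq n : 4 ^ n * ((/2) ^ n * (/2) ^ n) = 1.
Proof.
  rewrite <- Rpow_mult_distr, <- Rpow_mult_distr.
  replace (4 * (/2 * /2)) with 1 by field. apply pow1.
Qed.

Lemma perimeter_nonneg T : 0 <= perimeter T.
Proof.
  destruct T as [[a b] c]. simpl. pose proof (Cmod_ge_0 (a - b)%C).
  pose proof (Cmod_ge_0 (b - c)%C). pose proof (Cmod_ge_0 (c - a)%C). lra.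
Qed.

Lemma in_cball_Rmax a b c : in_cball (Rmax (Cmod a) (Rmax (Cmod b) (Cmod c))) (a, b, c).
Proof.
  simpl. repeat split.
  - apply Rmax_l.
  - eapply Rle_trans; [apply Rmax_l | apply Rmax_r].
  - eapply Rle_trans; [apply Rmax_r | apply Rmax_r].
Qed.

Lemma goursat_limit_point h r T : continuous_disc h -> r < 1 -> in_cball r T ->
  exists w, in_disc w /\ forall n,
    Cmod (w - first_vertex (goursat_iter h T n))%C <= 4 * (perimeter T * (/2) ^ n).
Proof.
  intros Hh Hr HT. pose proof (fun n => goursat_iter_spec h r T n Hh Hr HT) as Hspec.
  destruct (C_halving_limit (fun n => first_vertex (goursat_iter h T n)) (perimeter T))
    as [w Hw]; [apply perimeter_nonneg | |].
  { intros n. change (goursat_iter h T (S n)) with (goursat_step h (goursat_iter h T n)).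
    destruct (Hspec n) as [_ [<- _]]. apply first_vertex_goursat_step. }
  exists w. split; [|exact Hw].
  unfold in_disc. apply Rle_lt_trans with r; [|exact Hr]. apply Rle_plus_epsilon. intros e He.
  destruct (geom_half_small (perimeter T) (e / 4)) as [N HN]; [apply perimeter_nonneg | lra |].
  specialize (HN N (le_n N)). pose proof (Hw N) as HwN. destruct (Hspec N) as [HbN _].
  revert HwN HbN. destruct (goursat_iter h T N) as [[x y] z]. simpl. intros HwN [Hx _].
  pose proof (Cmod_triangle (w - x)%C x) as H. replace (w - x + x)%C with w in H by ring. lra.
Qed.

Theorem goursat h a b c : holo_disc h -> in_disc a -> in_disc b -> in_disc c ->
  tri_int h a b c = RtoC 0.
Proof.
  intros Hh Ha Hb Hc. assert (Hcont := holo_continuous_disc h Hh).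
  set (r := Rmax (Cmod a) (Rmax (Cmod b) (Cmod c))).
  assert (Hr : r < 1) by (unfold r; repeat apply Rmax_lub_lt; auto).
  assert (HT := in_cball_Rmax a b c). fold r in HT.
  destruct (goursat_limit_point h r (a, b, c) Hcont Hr HT) as [w [Hw Hwn]].
  destruct (Hh w Hw) as [L HL]. apply Cdiff_is_derive in HL.
  set (P0 := perimeter (a, b, c)) in *.
  (* near [w], [h] is affine up to [eps |x - w|]: the [n]-th triangle carries at most
     [10 eps P_n^2] while the whole integral is at most [4^n] times it *)
  apply Cmod_eq_0, Rle_antisym; [|apply Cmod_ge_0].
  apply (Rle_0_of_le_eps _ (10 * (P0 * P0))). intros eps Heps.
  destruct (HL eps Heps) as [d [Hd Hdl]].
  destruct (geom_half_small P0 (d / 5)) as [n Hn]; [apply perimeter_nonneg | lra |].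
  specialize (Hn n (le_n n)). specialize (Hwn n).
  destruct (goursat_iter_spec h r (a, b, c) n Hcont Hr HT) as [Hball [Hper Htri]].
  fold P0 in Hper, Htri.
  change (tri_int h a b c) with (tri_int3 h (a, b, c)).
  eapply Rle_trans; [exact Htri|].
  replace (eps * (10 * (P0 * P0)))
    with (4 ^ n * (10 * eps * ((P0 * (/2) ^ n) * (P0 * (/2) ^ n)))).
  2:{ replace (4 ^ n * (10 * eps * (P0 * (/2) ^ n * (P0 * (/2) ^ n))))
        with ((4 ^ n * ((/2) ^ n * (/2) ^ n)) * (eps * (10 * (P0 * P0)))) by ring.
      rewrite pow4_half_sq. ring. }
  apply Rmult_le_compat_l; [apply pow_le; lra|].
  revert Hball Hper Hwn. destruct (goursat_iter h (a, b, c) n) as [[x y] z].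
  intros [Hx [Hy Hz]] Hper Hwn. simpl in Hwn.
  change (tri_int3 h (x, y, z)) with (tri_int h x y z). rewrite <- Hper.
  apply (tri_int_near_point h w L eps d); unfold in_disc; auto; try lra; rewrite Hper; lra.
Qed.

(** * Primitives and averages along rays *)

Lemma line_int_0_derive h z : holo_disc h -> in_disc z ->
  is_derive (fun w => line_int h 0 w) z (h z).
Proof.
  intros Hh Hz. apply Cdiff_is_derive. intros eps Heps.
  assert (Hc := holo_continuous_disc h Hh).
  destruct (Hc z Hz (eps / 4)) as [d [Hd Hhz]]; [lra|].
  exists (Rmin d (1 - Cmod z)). split; [apply Rmin_pos; unfold in_disc in Hz; lra|].
  intros w Hw.
  assert (Hw1 : Cmod (w - z)%C < d) by (eapply Rlt_le_trans; [exact Hw | apply Rmin_l]).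
  assert (Hwd : in_disc w).
  { unfold in_disc. pose proof (Cmod_triangle (w - z)%C z).
    replace (w - z + z)%C with w in H by ring.
    assert (Cmod (w - z)%C < 1 - Cmod z) by (eapply Rlt_le_trans; [exact Hw | apply Rmin_r]).
    lra. }
  (* Goursat on the triangle [0, z, w] reduces the difference quotient to the edge [z, w] *)
  pose proof (goursat h 0 z w Hh in_disc_0 Hz Hwd) as Ht. unfold tri_int in Ht.
  rewrite (line_int_rev h 0 w) in Ht by auto using in_disc_0, holo_continuous_disc.
  replace (line_int h 0 w - line_int h 0 z - (w - z) * h z)%C
    with (line_int h z w - (w - z) * h z)%C.
  2:{ apply Ceq_minus.
      transitivity (line_int h 0 z + line_int h z w + - line_int h 0 w)%C; [ring|].
      rewrite Ht. ring. }
  assert (Hok : ex_CInt (fun s => h (z + RtoC s * (w - z))%C) 0 1) by now apply ex_CInt_seg.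
  unfold line_int.
  replace ((w - z) * CInt (fun s => h (z + RtoC s * (w - z))%C) 0 1 - (w - z) * h z)%C
    with ((w - z) * (CInt (fun s => h (z + RtoC s * (w - z))%C) 0 1
                     - CInt (fun _ => h z) 0 1))%C
    by (rewrite CInt_const, Rminus_0_r; ring).
  rewrite <- CInt_minus by auto using ex_CInt_const.
  rewrite Cmod_mult, Rmult_comm. apply Rmult_le_compat_r; [apply Cmod_ge_0|].
  apply Rle_trans with (2 * ((1 - 0) * (eps / 4))); [|lra].
  apply CInt_bound; [lra | auto using ex_CInt_minus, ex_CInt_const |].
  intros s Hs. left. apply Hhz.
  replace (z + RtoC s * (w - z) - z)%C with (RtoC s * (w - z))%C by ring.
  rewrite Cmod_mult, Cmod_RtoC by lra. pose proof (Cmod_ge_0 (w - z)%C). nra.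
Qed.

Definition ray_avg (h : C -> C) (z : C) : C := CInt (fun s => h (RtoC s * z)%C) 0 1.

Lemma ex_CInt_ray h z : continuous_disc h -> in_disc z ->
  ex_CInt (fun s => h (RtoC s * z)%C) 0 1.
Proof.
  intros Hh Hz. eapply ex_CInt_ext; [|apply (ex_CInt_seg h 0 z); auto using in_disc_0].
  intros x _. cbv beta. f_equal. ring.
Qed.

Lemma ex_RInt_Cmod_ray h z : continuous_disc h -> in_disc z ->
  ex_RInt (fun s => Cmod (h (RtoC s * z)%C)) 0 1.
Proof.
  intros Hh Hz.
  apply (ex_RInt_ext (fun s => Cmod (h (0 + RtoC s * (z - 0))%C)));
    [intros x _; cbv beta; do 2 f_equal; ring|].
  apply ex_RInt_Cmod_continuous; [lra|]. intros s Hs.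
  apply Rcontinuous_C_seg, Hh, Cmod_convex_lt; [apply in_disc_0 | exact Hz | exact Hs].
Qed.

Lemma Cmod_ray_avg_le h z : continuous_disc h -> in_disc z ->
  Cmod (ray_avg h z) <= RInt (fun s => Cmod (h (RtoC s * z)%C)) 0 1.
Proof. intros. apply Cmod_CInt_le; auto using ex_CInt_ray, ex_RInt_Cmod_ray. Qed.

Lemma ray_avg_line_int h z : z <> RtoC 0 -> ray_avg h z = (/ z * line_int h 0 z)%C.
Proof.
  intros Hz. unfold ray_avg, line_int.
  rewrite (CInt_ext (fun s => h (0 + RtoC s * (z - 0))%C) (fun s => h (RtoC s * z)%C))
    by (intros; f_equal; ring).
  field. exact Hz.
Qed.

Lemma ray_avg_derive_0 h l : continuous_disc h -> Cdiff h (RtoC 0) l ->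
  is_derive (ray_avg h) (RtoC 0) (RtoC (/2) * l)%C.
Proof.
  intros Hc Hl. apply Cdiff_is_derive. intros eps Heps.
  destruct (Hl (eps / 2)) as [d [Hd Hhl]]; [lra|].
  exists (Rmin d 1). split; [apply Rmin_pos; lra|]. intros w Hw.
  replace (w - 0)%C with w in * by ring.
  assert (Hw1 : Cmod w < d) by (eapply Rlt_le_trans; [exact Hw | apply Rmin_l]).
  assert (Hw2 : in_disc w) by (eapply Rlt_le_trans; [exact Hw | apply Rmin_r]).
  assert (E0 : ray_avg h 0 = h 0).
  { unfold ray_avg. rewrite (CInt_ext _ (fun _ => h 0)) by (intros; f_equal; ring).
    rewrite CInt_const, Rminus_0_r. ring. }
  assert (HA : ex_CInt (fun s => 0 + RtoC s * (w * l))%C 0 1).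
  { apply (ex_CInt_ext (fun s => (fun _ => RtoC 0) s + (w * l) * RtoC s)%C);
      [intros x _; cbv beta; ring|].
    apply ex_CInt_plus; [apply ex_CInt_const | apply ex_CInt_cmul, ex_CInt_id]. }
  (* the linear term [w l / 2] is the average of [s w l] *)
  replace (ray_avg h w - ray_avg h 0 - w * (RtoC (/2) * l))%C
    with (CInt (fun s => h (RtoC s * w) - h 0 - (0 + RtoC s * (w * l)))%C 0 1).
  2:{ rewrite E0, !CInt_minus, CInt_const, CInt_affine, Rminus_0_r;
      auto using ex_CInt_minus, ex_CInt_const, ex_CInt_ray.
      unfold ray_avg. ring. }
  replace (eps * Cmod w) with (2 * ((1 - 0) * (eps / 2 * Cmod w))) by field.
  apply CInt_bound; [lra | auto using ex_CInt_minus, ex_CInt_const, ex_CInt_ray |].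
  intros s Hs.
  assert (Hsw : Cmod (RtoC s * w)%C <= Cmod w).
  { rewrite Cmod_mult, Cmod_RtoC by lra. pose proof (Cmod_ge_0 w). nra. }
  specialize (Hhl (RtoC s * w)%C). replace (RtoC s * w - 0)%C with (RtoC s * w)%C in Hhl by ring.
  replace (h (RtoC s * w) - h 0 - (0 + RtoC s * (w * l)))%C
    with (h (RtoC s * w) - h 0 - RtoC s * w * l)%C by ring.
  eapply Rle_trans; [apply Hhl; lra|]. apply Rmult_le_compat_l; lra.
Qed.

Lemma ray_avg_holo h : holo_disc h -> holo_disc (ray_avg h).
Proof.
  intros Hh z Hz. assert (Hc := holo_continuous_disc h Hh).
  destruct (Req_EM_T (Cmod z) 0) as [E | E].
  - apply Cmod_eq_0 in E. subst z.
    destruct (Hh _ in_disc_0) as [l Hl].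
    exists (RtoC (/2) * l)%C. apply ray_avg_derive_0; [exact Hc | now apply Cdiff_is_derive].
  - assert (Hz0 : z <> RtoC 0) by (intros ->; apply E, Cmod_0).
    eexists. apply (is_derive_ext_ball (fun w => / w * line_int h 0 w)%C _ _ _ (Cmod z));
      [now apply Cmod_gt_0 | |].
    2:{ apply is_derive_C_AbsRing.
        apply (is_derive_mult Cinv (fun w => line_int h 0 w)); [| | exact Cmult_comm];
          apply is_derive_C_AbsRing; auto using is_derive_Cinv, line_int_0_derive. }
    intros w Hw. rewrite ray_avg_line_int; [reflexivity|].
    intros ->. replace (0 - z)%C with (- z)%C in Hw by ring. rewrite Cmod_opp in Hw. lra.
Qed.

(** * The generalized Cesàro operator *)

Definition cesaro_integrand (t : R) (f : C -> C) (xi : C) : C :=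
  Cdiv (f xi) (Cminus (RtoC 1) (Cmult (RtoC t) xi)).

Lemma cesaro_ray_avg t f z : cesaro t f z = ray_avg (cesaro_integrand t f) z.
Proof.
  unfold cesaro. destruct (Req_EM_T (Cmod z) 0) as [E | E].
  - apply Cmod_eq_0 in E. subst z. unfold ray_avg.
    rewrite (CInt_ext _ (fun _ => cesaro_integrand t f (RtoC 0))) by (intros; f_equal; ring).
    rewrite CInt_const, Rminus_0_r. unfold cesaro_integrand, Cdiv.
    replace (RtoC 1 - RtoC t * RtoC 0)%C with (RtoC 1) by ring.
    rewrite <- RtoC_inv, Rinv_1 by lra. ring.
  - assert (Hz : z <> RtoC 0) by (intros ->; apply E, Cmod_0).
    change (/ z * (z * ray_avg (cesaro_integrand t f) z) = ray_avg (cesaro_integrand t f) z)%C.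
    field. exact Hz.
Qed.

Lemma Cmod_one_sub_ge t w : 0 <= t <= 1 -> 1 - t * Cmod w <= Cmod (1 - RtoC t * w)%C.
Proof.
  intros Ht. pose proof (Cmod_rev_triangle (RtoC 1) (- (RtoC t * w))%C) as H.
  rewrite Cmod_opp, Cmod_mult, !Cmod_RtoC in H by lra. exact H.
Qed.

Lemma one_sub_neq_0 t w : 0 <= t <= 1 -> in_disc w -> (1 - RtoC t * w)%C <> RtoC 0.
Proof.
  intros Ht Hw E. pose proof (Cmod_one_sub_ge t w Ht) as H. rewrite E, Cmod_0 in H.
  unfold in_disc in Hw. pose proof (Cmod_ge_0 w). nra.
Qed.

Lemma cesaro_integrand_holo t f : 0 <= t <= 1 -> holo_disc f ->
  holo_disc (cesaro_integrand t f).
Proof.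
  intros Ht Hf w Hw. destruct (Hf w Hw) as [lf Hlf].
  assert (Hnz : (1 + - RtoC t * w)%C <> RtoC 0).
  { replace (1 + - RtoC t * w)%C with (1 - RtoC t * w)%C by ring. now apply one_sub_neq_0. }
  assert (Hd : ex_derive (fun x => / (1 - RtoC t * x))%C w).
  { eexists. apply (is_derive_ext (fun x => / (1 + - RtoC t * x))%C);
      [intros x; f_equal; ring|].
    apply (is_derive_comp Cinv (fun x => 1 + - RtoC t * x)%C);
      [apply is_derive_Cinv, Hnz | apply is_derive_C_AbsRing, is_derive_affine]. }
  destruct Hd as [li Hli].
  eexists. apply is_derive_C_AbsRing.
  apply (is_derive_mult f (fun x => / (1 - RtoC t * x))%C); [| | exact Cmult_comm];
    apply is_derive_C_AbsRing; eassumption.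
Qed.

Lemma cesaro_holo t f : 0 <= t <= 1 -> holo_disc f -> holo_disc (cesaro t f).
Proof.
  intros Ht Hf z Hz.
  destruct (ray_avg_holo _ (cesaro_integrand_holo t f Ht Hf) z Hz) as [l Hl].
  exists l. apply (is_derive_ext (ray_avg (cesaro_integrand t f))); [|exact Hl].
  intros w. symmetry. apply cesaro_ray_avg.
Qed.

Lemma cesaro_minus t f g z : 0 <= t <= 1 -> holo_disc f -> holo_disc g -> in_disc z ->
  (cesaro t g z - cesaro t f z)%C = cesaro t (fun z => g z - f z)%C z.
Proof.
  intros Ht Hf Hg Hz. rewrite !cesaro_ray_avg. unfold ray_avg.
  rewrite <- CInt_minus
    by (apply ex_CInt_ray; auto; apply holo_continuous_disc, cesaro_integrand_holo; auto).
  apply CInt_ext. intros x _. unfold cesaro_integrand, Cdiv. ring.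
Qed.

Definition cesaro_const (t : R) : R := RInt (fun s => / (1 - t * s)) 0 1.

Lemma ex_RInt_cesaro_const t : 0 <= t < 1 -> ex_RInt (fun s => / (1 - t * s)) 0 1.
Proof.
  intros Ht. apply (ex_RInt_continuous (V:=R_CompleteNormedModule)).
  rewrite Rmin_left, Rmax_right by lra. intros z Hz.
  assert (D : ex_derive (fun s => / (1 - t * s)) z) by (auto_derive; nra).
  exact (ex_derive_continuous (K:=R_AbsRing) (V:=R_NormedModule) _ _ D).
Qed.

Lemma cesaro_const_ge_1 t : 0 <= t < 1 -> 1 <= cesaro_const t.
Proof.
  intros Ht. unfold cesaro_const.
  replace 1 with (RInt (fun _ => 1) 0 1) at 1.
  2:{ rewrite (RInt_const (V:=R_CompleteNormedModule)).
      unfold scal; simpl; unfold mult; simpl. ring. }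
  apply RInt_le; [lra | apply (ex_RInt_const (V:=R_CompleteNormedModule))
                 | now apply ex_RInt_cesaro_const |].
  intros x Hx. rewrite <- Rinv_1 at 1. apply Rinv_le_contravar; nra.
Qed.

Lemma cesaro_const_0 : cesaro_const 0 = 1.
Proof.
  unfold cesaro_const. rewrite (RInt_ext _ (fun _ => 1)).
  2:{ intros. rewrite Rmult_0_l, Rminus_0_r, Rinv_1. reflexivity. }
  rewrite (RInt_const (V:=R_CompleteNormedModule)). unfold scal; simpl; unfold mult; simpl. ring.
Qed.

Lemma cesaro_const_log t : 0 < t < 1 -> cesaro_const t = - ln (1 - t) / t.
Proof.
  intros Ht. unfold cesaro_const. apply is_RInt_unique.
  assert (H := is_RInt_derive (V:=R_CompleteNormedModule)
                 (fun s => - ln (1 - t * s) / t) (fun s => / (1 - t * s)) 0 1).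
  replace (- ln (1 - t) / t) with (@minus R_AbelianGroup
    ((fun s => - ln (1 - t * s) / t) 1) ((fun s => - ln (1 - t * s) / t) 0)).
  2:{ unfold minus, plus, opp; simpl. rewrite Rmult_0_r, Rminus_0_r, ln_1, Rmult_1_r. field. lra. }
  apply H.
  - rewrite Rmin_left, Rmax_right by lra. intros x Hx. auto_derive; [nra|]. field. split; nra.
  - rewrite Rmin_left, Rmax_right by lra. intros x Hx.
    assert (D : ex_derive (fun s => / (1 - t * s)) x) by (auto_derive; nra).
    exact (ex_derive_continuous (K:=R_AbsRing) (V:=R_NormedModule) _ _ D).
Qed.

Lemma Cmod_cesaro_integrand_le v t u B z s : is_weight v -> 0 <= t < 1 ->
  (forall w, in_disc w -> Cmod (u w) * v (Cmod w) <= B) -> in_disc z -> 0 <= s <= 1 ->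
  Cmod (cesaro_integrand t u (RtoC s * z)%C) <= B / v (Cmod z) * / (1 - t * s).
Proof.
  intros [Hvp [Hvm _]] Ht HB Hz Hs. unfold in_disc in Hz. pose proof (Cmod_ge_0 z).
  assert (Hvz : 0 < v (Cmod z)) by (apply Hvp; lra).
  assert (Hsz : Cmod (RtoC s * z)%C = s * Cmod z) by (rewrite Cmod_mult, Cmod_RtoC; lra).
  assert (Hsz1 : in_disc (RtoC s * z)%C) by (unfold in_disc; rewrite Hsz; nra).
  pose proof (Cmod_one_sub_ge t (RtoC s * z)%C ltac:(lra)) as Hden. rewrite Hsz in Hden.
  unfold cesaro_integrand. rewrite Cmod_div by (apply one_sub_neq_0; auto; lra).
  (* [v] is non-increasing and [|s z| <= |z|] *)
  assert (Hu : Cmod (u (RtoC s * z)%C) <= B / v (Cmod z)).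
  { apply Rmult_le_reg_r with (v (Cmod z)); auto. unfold Rdiv.
    rewrite Rmult_assoc, Rinv_l, Rmult_1_r by lra.
    eapply Rle_trans; [|apply (HB _ Hsz1)]. apply Rmult_le_compat_l; [apply Cmod_ge_0|].
    rewrite Hsz. apply Hvm; nra. }
  pose proof (Cmod_ge_0 (u (RtoC s * z)%C)).
  assert (Hts : t * (s * Cmod z) <= t * s) by (apply Rmult_le_compat_l; nra).
  unfold Rdiv at 1. apply Rmult_le_compat; try lra.
  - left. apply Rinv_0_lt_compat. nra.
  - apply Rinv_le_contravar; nra.
Qed.

Lemma Cmod_cesaro_le v t u B z : is_weight v -> 0 <= t < 1 -> holo_disc u ->
  (forall w, in_disc w -> Cmod (u w) * v (Cmod w) <= B) -> in_disc z ->
  Cmod (cesaro t u z) * v (Cmod z) <= B * cesaro_const t.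
Proof.
  intros Hv Ht Hu HB Hz.
  assert (Hc : continuous_disc (cesaro_integrand t u))
    by (apply holo_continuous_disc, cesaro_integrand_holo; auto; lra).
  assert (Hvz : 0 < v (Cmod z)) by (apply (proj1 Hv); split; [apply Cmod_ge_0 | exact Hz]).
  set (c := B / v (Cmod z)).
  apply Rle_trans with (c * cesaro_const t * v (Cmod z)); [|unfold c; right; field; lra].
  apply Rmult_le_compat_r; [lra|].
  rewrite cesaro_ray_avg. eapply Rle_trans; [now apply Cmod_ray_avg_le|].
  replace (c * cesaro_const t) with (RInt (fun s => scal c (/ (1 - t * s))) 0 1)
    by (rewrite (RInt_scal (V:=R_CompleteNormedModule)) by (now apply ex_RInt_cesaro_const);
        reflexivity).
  apply RInt_le; [lra | now apply ex_RInt_Cmod_ray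
                 | apply (ex_RInt_scal (V:=R_CompleteNormedModule)), ex_RInt_cesaro_const; auto |].
  intros s Hs. apply (Cmod_cesaro_integrand_le v); auto; lra.
Qed.

(** * [C_t] on [H^oo_v] *)

Lemma Lub_Rbar_finite (E : R -> Prop) x0 M : E x0 -> (forall x, E x -> x <= M) ->
  exists N, Lub_Rbar E = Finite N /\ (forall x, E x -> x <= N) /\ N <= M.
Proof.
  intros H0 HM. destruct (Lub_Rbar_correct E) as [Hub Hlub].
  assert (H1 : Rbar_le (Lub_Rbar E) M) by (apply Hlub; intros x Hx; simpl; apply HM; auto).
  assert (H2 := Hub x0 H0).
  destruct (Lub_Rbar E) as [N | |]; simpl in *; try contradiction.
  exists N. split; [reflexivity|]. split; [intros x Hx; exact (Hub x Hx) | exact H1].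
Qed.

Lemma normv_bounds v f M : (forall z, in_disc z -> Cmod (f z) * v (Cmod z) <= M) ->
  (forall z, in_disc z -> Cmod (f z) * v (Cmod z) <= normv v f) /\ normv v f <= M.
Proof.
  intros HM.
  destruct (Lub_Rbar_finite (fun x => exists z, in_disc z /\ x = Cmod (f z) * v (Cmod z))
              (Cmod (f (RtoC 0)) * v (Cmod (RtoC 0))) M) as [N [EN [HN1 HN2]]].
  - exists (RtoC 0). split; [apply in_disc_0 | reflexivity].
  - intros x [z [Hz ->]]. auto.
  - unfold normv. rewrite EN. simpl. split; auto. intros z Hz. apply HN1. exists z; auto.
Qed.

Lemma normv_nonneg v f : is_weight v -> in_Hv v f -> 0 <= normv v f.
Proof.
  intros [Hvp _] [_ [M HM]]. destruct (normv_bounds v f M HM) as [H _].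
  specialize (H _ in_disc_0). rewrite Cmod_0 in H.
  pose proof (Cmod_ge_0 (f (RtoC 0))). assert (0 < v 0) by (apply Hvp; lra). nra.
Qed.

Lemma normv_ext v f g : (forall z, in_disc z -> f z = g z) -> normv v f = normv v g.
Proof.
  intros Hfg. unfold normv. f_equal. apply Lub_Rbar_eqset.
  intros x. split; intros [z [Hz ->]]; exists z; rewrite (Hfg z Hz); auto.
Qed.

Lemma in_Hv_minus v f g : is_weight v -> in_Hv v f -> in_Hv v g ->
  in_Hv v (fun z => Cminus (g z) (f z)).
Proof.
  intros [Hvp _] [Hf [Mf HMf]] [Hg [Mg HMg]]. split.
  - intros z Hz. destruct (Hf z Hz) as [lf Hlf]. destruct (Hg z Hz) as [lg Hlg].
    exists (lg - lf)%C. exact (is_derive_minus g f z lg lf Hlg Hlf).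
  - exists (Mg + Mf). intros z Hz.
    pose proof (Cmod_triangle (g z) (- f z)%C) as H. rewrite Cmod_opp in H.
    assert (0 < v (Cmod z)) by (apply Hvp; split; [apply Cmod_ge_0 | exact Hz]).
    specialize (HMf z Hz). specialize (HMg z Hz). unfold Cminus. nra.
Qed.

Section CesaroOnHv.

Variables (v : R -> R) (t : R).
Hypotheses (hv : is_weight v) (Ht : 0 <= t < 1).

Lemma cesaro_in_Hv f : in_Hv v f -> in_Hv v (cesaro t f).
Proof.
  intros [Hf [M HM]]. split; [apply cesaro_holo; auto; lra|].
  exists (M * cesaro_const t). intros z Hz. now apply Cmod_cesaro_le.
Qed.

Lemma normv_cesaro_le f : in_Hv v f -> normv v (cesaro t f) <= normv v f * cesaro_const t.
Proof.
  intros [Hf [M HM]].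
  destruct (normv_bounds v f M HM) as [Hub _].
  apply (normv_bounds v (cesaro t f)). intros z Hz. now apply Cmod_cesaro_le.
Qed.

Lemma normv_cesaro_minus_le f g : in_Hv v f -> in_Hv v g ->
  normv v (fun z => Cminus (cesaro t g z) (cesaro t f z))
  <= normv v (fun z => Cminus (g z) (f z)) * cesaro_const t.
Proof.
  intros Hf Hg.
  rewrite (normv_ext v _ (cesaro t (fun z => Cminus (g z) (f z)))).
  - apply normv_cesaro_le. now apply in_Hv_minus.
  - intros z Hz. apply cesaro_minus; auto; [lra | apply Hf | apply Hg].
Qed.

Lemma cesaro_opnorm_bounds :
  exists N, cesaro_opnorm v t = Finite N /\ 1 <= N /\ N <= cesaro_const t.
Proof.
  pose proof hv as [Hvp [Hvm _]].
  assert (Hv0 : 0 < v 0) by (apply Hvp; lra).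
  set (f0 := fun _ : C => RtoC (/ v 0)).
  assert (Hf0b : forall z, in_disc z -> Cmod (f0 z) * v (Cmod z) <= 1).
  { intros z Hz. unfold f0. rewrite Cmod_RtoC by (left; now apply Rinv_0_lt_compat).
    assert (v (Cmod z) <= v 0) by (apply Hvm; [lra | apply Cmod_ge_0 | exact Hz]).
    apply Rmult_le_reg_l with (v 0); auto.
    rewrite <- Rmult_assoc, Rinv_r by lra. lra. }
  assert (Hf0 : in_Hv v f0).
  { split; [intros z _; eexists; apply is_derive_const | exists 1; exact Hf0b]. }
  assert (Hn0 : normv v f0 <= 1) by apply (normv_bounds v f0 1 Hf0b).
  assert (HC0 : 1 <= normv v (cesaro t f0)).
  { destruct (cesaro_in_Hv f0 Hf0) as [_ [M0 HM0]].
    eapply Rle_trans; [|apply (normv_bounds v (cesaro t f0) M0 HM0), in_disc_0].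
    unfold cesaro. rewrite Cmod_0. destruct (Req_EM_T 0 0) as [_ | []]; [|reflexivity].
    unfold f0. rewrite Cmod_RtoC, Rinv_l by (try left; try apply Rinv_0_lt_compat; lra). lra. }
  destruct (Lub_Rbar_finite
              (fun x => exists f, in_Hv v f /\ normv v f <= 1 /\ x = normv v (cesaro t f))
              (normv v (cesaro t f0)) (cesaro_const t)) as [N [EN [HN1 HN2]]].
  - exists f0. auto.
  - intros x [f [Hf [Hn ->]]]. eapply Rle_trans; [now apply normv_cesaro_le|].
    pose proof (normv_nonneg v f hv Hf). pose proof (cesaro_const_ge_1 t Ht). nra.
  - exists N. unfold cesaro_opnorm. rewrite EN. repeat split; auto.
    eapply Rle_trans; [exact HC0 | apply HN1]. exists f0. auto.
Qed.

End CesaroOnHv.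

Theorem proposition2p4 (v : R -> R) (hv : is_weight v) :
  (forall t, 0 <= t < 1 ->
     (forall f, in_Hv v f -> in_Hv v (cesaro t f)) /\
     (forall f, in_Hv v f -> forall eps, 0 < eps -> exists delta, 0 < delta /\
        forall g, in_Hv v g ->
          normv v (fun z => Cminus (g z) (f z)) < delta ->
          normv v (fun z => Cminus (cesaro t g z) (cesaro t f z)) < eps)) /\
  cesaro_opnorm v 0 = Finite 1 /\
  (forall t, 0 < t < 1 ->
     exists N, cesaro_opnorm v t = Finite N /\
       1 <= N /\ N <= - ln (1 - t) / t).
Proof.
  split; [|split].
  - intros t Ht. split; [intros f; now apply cesaro_in_Hv|].
    intros f Hf eps Heps. pose proof (cesaro_const_ge_1 t Ht) as HK.
    exists (eps / cesaro_const t). split; [apply Rdiv_lt_0_compat; lra|].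
    intros g Hg Hd. eapply Rle_lt_trans; [now apply normv_cesaro_minus_le|].
    apply Rmult_lt_compat_r with (r := cesaro_const t) in Hd; [|lra].
    replace (eps / cesaro_const t * cesaro_const t) with eps in Hd by (field; lra). exact Hd.
  - destruct (cesaro_opnorm_bounds v 0 hv) as [N [EN [H1 H2]]]; [lra|].
    rewrite cesaro_const_0 in H2. rewrite EN. f_equal. lra.
  - intros t Ht. destruct (cesaro_opnorm_bounds v t hv) as [N [EN [H1 H2]]]; [lra|].
    exists N. rewrite <- cesaro_const_log by exact Ht. auto.
Qed.
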